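(* If $u\in\operatorname{Lip}([0,1])$, then for all $n\in\mathbb{N}$ the function $\operatorname{Avg}_1^{(n)}u$ is Lipschitz on $V_1^{(n)}$ with $[\operatorname{Avg}_1^{(n)}u]_{\operatorname{Lip}(V_1^{(n)})}\le[u]_{\operatorname{Lip}([0,1])}$.
   Context: $V_1^{(n)}=\{k/2^n:0\le k\le2^n\}$. For $\bar x\in V_1^{(n)}$, $U_1^{(n)}(\bar x)=[\bar x-2^{-n-1},\bar x+2^{-n-1})\cap[0,1]$ and $\operatorname{Avg}_1^{(n)}u(\bar x)=\frac1{|U_1^{(n)}(\bar x)|}\int_{U_1^{(n)}(\bar x)}u(z)\,dz$. $[f]_{\operatorname{Lip}(A)}=\sup_{x\ne y\in A}|f(x)-f(y)|/|x-y|$. *)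

From Stdlib Require Import Reals Lra.
From Coquelicot Require Import Coquelicot.
Open Scope R_scope.

Definition V1 (n : nat) (x : R) : Prop :=
  exists k : nat, (k <= 2 ^ n)%nat /\ x = INR k / 2 ^ n.

(* U_1^(n)(xbar) = [xbar - 2^(-n-1), xbar + 2^(-n-1)) ∩ [0,1];
   its endpoints (the half-open/closed distinction is irrelevant for the integral) *)
Definition U1_lo (n : nat) (xb : R) : R := Rmax 0 (xb - / 2 ^ (S n)).
Definition U1_hi (n : nat) (xb : R) : R := Rmin 1 (xb + / 2 ^ (S n)).

Definition Avg1 (n : nat) (u : R -> R) (xb : R) : R :=
  RInt u (U1_lo n xb) (U1_hi n xb) / (U1_hi n xb - U1_lo n xb).

Definition lipschitz_on (A : R -> Prop) (f : R -> R) : Prop :=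
  exists L : R, forall x y, A x -> A y -> Rabs (f x - f y) <= L * Rabs (x - y).

Definition lip_seminorm (A : R -> Prop) (f : R -> R) : Rbar :=
  Lub_Rbar (fun r => exists x y, A x /\ A y /\ x <> y /\
                                 r = Rabs (f x - f y) / Rabs (x - y)).

Definition I01 (x : R) : Prop := 0 <= x <= 1.

(* After extending u to a [u]_Lip-Lipschitz function on R (by clamping the
   argument to [0, 1]), rescaling the averaging window to [0, 1] gives
   Avg1 n u x = \int_0^1 u ((1 - t) U1_lo n x + t U1_hi n x) dt.  Both window
   endpoints are 1-Lipschitz in x, so for two centres x, y the integrands
   differ pointwise by at most [u]_Lip |x - y|. *)
From Stdlib Require Import Reals Lra.
From Coquelicot Require Import Coquelicot.
Open Scope R_scope.

Lemma Rabs_Rmax_l_le (c a b : R) : Rabs (Rmax c a - Rmax c b) <= Rabs (a - b).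
Proof. apply Rabs_le; unfold Rabs, Rmax; destruct Rcase_abs; repeat destruct Rle_dec; lra. Qed.

Lemma Rabs_Rmin_l_le (c a b : R) : Rabs (Rmin c a - Rmin c b) <= Rabs (a - b).
Proof. apply Rabs_le; unfold Rabs, Rmin; destruct Rcase_abs; repeat destruct Rle_dec; lra. Qed.

Lemma Rabs_convex_comb_sub_le (lo1 hi1 lo2 hi2 D t : R) : 0 <= t <= 1 ->
  Rabs (lo1 - lo2) <= D -> Rabs (hi1 - hi2) <= D ->
  Rabs ((hi1 - lo1) * t + lo1 - ((hi2 - lo2) * t + lo2)) <= D.
Proof.
  intros Ht Hlo Hhi; apply Rabs_le_between in Hlo, Hhi; apply Rabs_le_between.
  replace ((hi1 - lo1) * t + lo1 - ((hi2 - lo2) * t + lo2))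
    with ((1 - t) * (lo1 - lo2) + t * (hi1 - hi2)) by ring.
  split; nra.
Qed.

Section LipschitzFunction.

Variables (w : R -> R) (K : R).
Hypothesis w_lip : forall a b, Rabs (w a - w b) <= K * Rabs (a - b).

Lemma lipschitz_const_ge0 : 0 <= K.
Proof.
  pose proof (w_lip 1 0) as H10; pose proof (Rabs_pos (w 1 - w 0)).
  rewrite Rminus_0_r, Rabs_R1 in H10; lra.
Qed.

Lemma lipschitz_continuous (x : R) : continuous w x.
Proof.
  apply filterlim_locally; intros eps.
  pose proof lipschitz_const_ge0.
  assert (Hdelta : 0 < eps / (K + 1)) by (apply Rdiv_lt_0_compat; [apply cond_pos | lra]).
  exists (mkposreal _ Hdelta); intros y Hy.
  change (Rabs (w y - w x) < eps).
  change (Rabs (y - x) < eps / (K + 1)) in Hy.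
  apply Rle_lt_trans with (K * Rabs (y - x)); [apply w_lip |].
  apply Rle_lt_trans with ((K + 1) * Rabs (y - x)).
  - pose proof (Rabs_pos (y - x)); nra.
  - rewrite Rmult_comm; apply Rlt_div_r; lra.
Qed.

Lemma ex_RInt_lipschitz (a b : R) : ex_RInt w a b.
Proof.
  apply (ex_RInt_continuous (V := R_CompleteNormedModule)); intros z _.
  apply lipschitz_continuous.
Qed.

Lemma lipschitz_comp_lin (s c : R) :
  forall a b, Rabs (w (s * a + c) - w (s * b + c)) <= K * Rabs s * Rabs (a - b).
Proof.
  intros a b; rewrite Rmult_assoc, <- Rabs_mult.
  replace (s * (a - b)) with (s * a + c - (s * b + c)) by ring; apply w_lip.
Qed.

End LipschitzFunction.

Section Rescaling.

Variables (w : R -> R) (K : R).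
Hypothesis w_lip : forall a b, Rabs (w a - w b) <= K * Rabs (a - b).

Lemma ex_RInt_rescaled (lo hi : R) : ex_RInt (fun t => w ((hi - lo) * t + lo)) 0 1.
Proof. exact (ex_RInt_lipschitz _ _ (lipschitz_comp_lin _ _ w_lip (hi - lo) lo) 0 1). Qed.

Lemma RInt_mean_rescaled (lo hi : R) : lo <> hi ->
  RInt w lo hi / (hi - lo) = RInt (fun t => w ((hi - lo) * t + lo)) 0 1.
Proof.
  intros Hne.
  pose proof (RInt_comp_lin w (hi - lo) lo 0 1) as E.
  replace ((hi - lo) * 0 + lo) with lo in E by ring.
  replace ((hi - lo) * 1 + lo) with hi in E by ring.
  rewrite <- E by exact (ex_RInt_lipschitz _ _ w_lip _ _).
  rewrite RInt_scal by apply ex_RInt_rescaled.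
  unfold scal; simpl; unfold mult; simpl; field; lra.
Qed.

Lemma RInt_rescaled_dist_le (lo1 hi1 lo2 hi2 D : R) :
  Rabs (lo1 - lo2) <= D -> Rabs (hi1 - hi2) <= D ->
  Rabs (RInt (fun t => w ((hi1 - lo1) * t + lo1)) 0 1
        - RInt (fun t => w ((hi2 - lo2) * t + lo2)) 0 1) <= K * D.
Proof.
  intros Hlo Hhi.
  replace (RInt _ 0 1 - RInt _ 0 1) with
    (RInt (fun t => w ((hi1 - lo1) * t + lo1) - w ((hi2 - lo2) * t + lo2)) 0 1)
    by exact (RInt_minus _ _ 0 1 (ex_RInt_rescaled lo1 hi1) (ex_RInt_rescaled lo2 hi2)).
  replace (K * D) with ((1 - 0) * (K * D)) by ring.
  apply abs_RInt_le_const; [lra | |].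
  - apply (ex_RInt_minus (V := R_NormedModule)); apply ex_RInt_rescaled.
  - intros t Ht; eapply Rle_trans; [apply w_lip |].
    apply Rmult_le_compat_l; [exact (lipschitz_const_ge0 _ _ w_lip) |].
    exact (Rabs_convex_comb_sub_le _ _ _ _ _ _ Ht Hlo Hhi).
Qed.

End Rescaling.

Lemma lip_seminorm_le (A : R -> Prop) (f : R -> R) (L : R) :
  (forall x y, A x -> A y -> Rabs (f x - f y) <= L * Rabs (x - y)) ->
  Rbar_le (lip_seminorm A f) L.
Proof.
  intros Hf; apply (proj2 (Lub_Rbar_correct _)).
  intros r (x & y & Hx & Hy & Hxy & ->); simpl.
  apply Rle_div_l; [apply Rabs_pos_lt; lra | auto].
Qed.

Lemma lip_seminorm_ge_ratio (A : R -> Prop) (f : R -> R) (x y : R) :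
  A x -> A y -> x <> y ->
  Rbar_le (Rabs (f x - f y) / Rabs (x - y)) (lip_seminorm A f).
Proof.
  intros Hx Hy Hxy; apply (proj1 (Lub_Rbar_correct _)).
  exists x, y; auto.
Qed.

Lemma lip_seminorm_finite_bound (A : R -> Prop) (f : R -> R) (K : R) :
  lip_seminorm A f = Finite K ->
  forall x y, A x -> A y -> Rabs (f x - f y) <= K * Rabs (x - y).
Proof.
  intros HK x y Hx Hy; destruct (Req_dec x y) as [-> | Hxy].
  - rewrite !Rminus_diag, Rabs_R0; lra.
  - pose proof (lip_seminorm_ge_ratio A f x y Hx Hy Hxy) as Hr.
    rewrite HK in Hr; simpl in Hr.
    apply Rle_div_l in Hr; [lra | apply Rabs_pos_lt; lra].
Qed.

Definition clamp01 (x : R) : R := Rmax 0 (Rmin 1 x).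

Lemma clamp01_I01 (x : R) : I01 (clamp01 x).
Proof. unfold I01, clamp01, Rmax, Rmin; repeat destruct Rle_dec; lra. Qed.

Lemma clamp01_id (x : R) : I01 x -> clamp01 x = x.
Proof. unfold I01, clamp01, Rmax, Rmin; repeat destruct Rle_dec; lra. Qed.

Lemma clamp01_dist_le (a b : R) : Rabs (clamp01 a - clamp01 b) <= Rabs (a - b).
Proof. eapply Rle_trans; [apply Rabs_Rmax_l_le | apply Rabs_Rmin_l_le]. Qed.

Lemma lipschitz_comp_clamp01 (u : R -> R) (K : R) :
  (forall x y, I01 x -> I01 y -> Rabs (u x - u y) <= K * Rabs (x - y)) ->
  forall a b, Rabs (u (clamp01 a) - u (clamp01 b)) <= K * Rabs (a - b).
Proof.
  intros Hu a b.
  assert (K0 : 0 <= K).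
  { pose proof (Hu 1 0) as H10; pose proof (Rabs_pos (u 1 - u 0)).
    rewrite Rminus_0_r, Rabs_R1 in H10; unfold I01 in H10; lra. }
  eapply Rle_trans; [apply Hu; apply clamp01_I01 |].
  apply Rmult_le_compat_l; [exact K0 | apply clamp01_dist_le].
Qed.

Lemma V1_I01 (n : nat) (x : R) : V1 n x -> I01 x.
Proof.
  intros (k & Hk & ->).
  assert (Hpow : 0 < 2 ^ n) by (apply pow_lt; lra).
  apply le_INR in Hk; rewrite pow_INR in Hk.
  replace (INR 2) with 2 in Hk by (simpl; lra).
  pose proof (pos_INR k).
  split.
  - apply Rdiv_le_0_compat; lra.
  - apply Rle_div_l; lra.
Qed.

Lemma U1_lo_dist_le (n : nat) (x y : R) :
  Rabs (U1_lo n x - U1_lo n y) <= Rabs (x - y).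
Proof.
  eapply Rle_trans; [apply Rabs_Rmax_l_le |].
  right; f_equal; ring.
Qed.

Lemma U1_hi_dist_le (n : nat) (x y : R) :
  Rabs (U1_hi n x - U1_hi n y) <= Rabs (x - y).
Proof.
  eapply Rle_trans; [apply Rabs_Rmin_l_le |].
  right; f_equal; ring.
Qed.

Lemma U1_bounds (n : nat) (x : R) : I01 x ->
  0 <= U1_lo n x /\ U1_lo n x < U1_hi n x /\ U1_hi n x <= 1.
Proof.
  intros Hx; assert (Hr : 0 < / 2 ^ S n) by (apply Rinv_0_lt_compat, pow_lt; lra).
  unfold I01, U1_lo, U1_hi, Rmax, Rmin in *; repeat destruct Rle_dec; lra.
Qed.

Lemma Avg1_rescaled (n : nat) (u w : R -> R) (K x : R) :
  (forall a b, Rabs (w a - w b) <= K * Rabs (a - b)) ->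
  (forall z, I01 z -> w z = u z) -> I01 x ->
  Avg1 n u x = RInt (fun t => w ((U1_hi n x - U1_lo n x) * t + U1_lo n x)) 0 1.
Proof.
  intros Hw Hwu Hx; destruct (U1_bounds n x Hx) as (Hlo & Hlohi & Hhi).
  rewrite <- (RInt_mean_rescaled w K) by (auto; lra).
  unfold Avg1; f_equal; apply RInt_ext.
  intros z Hz; rewrite Rmin_left, Rmax_right in Hz by lra.
  symmetry; apply Hwu; unfold I01; lra.
Qed.

Lemma Avg1_lipschitz (n : nat) (u : R -> R) (K : R) :
  (forall x y, I01 x -> I01 y -> Rabs (u x - u y) <= K * Rabs (x - y)) ->
  forall x y, I01 x -> I01 y -> Rabs (Avg1 n u x - Avg1 n u y) <= K * Rabs (x - y).
Proof.
  intros Hu x y Hx Hy.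
  pose proof (lipschitz_comp_clamp01 u K Hu) as Hw.
  assert (Hwu : forall z, I01 z -> u (clamp01 z) = u z)
    by (intros z Hz; rewrite clamp01_id; auto).
  rewrite (Avg1_rescaled n u _ K x Hw Hwu Hx), (Avg1_rescaled n u _ K y Hw Hwu Hy).
  apply (RInt_rescaled_dist_le _ _ Hw); [apply U1_lo_dist_le | apply U1_hi_dist_le].
Qed.

Theorem lemma4p12 (u : R -> R) (hu : lipschitz_on I01 u) (n : nat) :
  lipschitz_on (V1 n) (Avg1 n u) /\
  Rbar_le (lip_seminorm (V1 n) (Avg1 n u)) (lip_seminorm I01 u).
Proof.
  split.
  - destruct hu as [L HL]; exists L; intros x y Hx Hy.
    apply (Avg1_lipschitz n u L HL); apply (V1_I01 n); assumption.
  - destruct (lip_seminorm I01 u) as [K | |] eqn:HK.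
    + apply lip_seminorm_le; intros x y Hx Hy.
      apply (Avg1_lipschitz n u K (lip_seminorm_finite_bound _ _ _ HK));
        apply (V1_I01 n); assumption.
    + destruct (lip_seminorm (V1 n) (Avg1 n u)); exact I.
    + pose proof (lip_seminorm_ge_ratio I01 u 0 1) as H01.
      rewrite HK in H01; destruct H01; unfold I01; lra.
Qed.
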